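(* Let $H=(V,E)$ be a hypergraph, let $e_1\in E$ and let $e_2\subsetneq e_1$ with $e_2\notin E$ and $|e_2|>1$. Define $H'=(V,E\cup\{e_2\})$. Then the projection $\operatorname{proj}_{\mathcal{J}^H}$ restricted to $\mathrm{MC}^{H'}$ is a linear isomorphism onto $\mathrm{MC}^H$, and \[\mathrm{MC}^{H'}=\Big\{w\in\mathbb{R}^{\mathcal{J}^{H'}}\ \Big|\ \operatorname{proj}_{\mathcal{J}^H}w\in\mathrm{MC}^H;\ w_J=\sum_{J'\in\mathcal{J}^{e_1}:\, J'\supseteq J} w_{J'}\ \ \forall J\in\mathcal{J}^{e_2}\Big\}.\]
   Context: Let $n$ be a positive integer, $[n]=\{1,\dots,n\}$. A hypergraph $H=(V,E)$ here has as vertex set $V$ a family of pairwise disjoint subsets of $[n]$, each of cardinality at least $2$, and hyperedge set $E$ consisting of subsets $e\subseteq V$ with $|e|\ge 2$. Write $L(V)=\{\{I\}: I\in V\}$. For a nonempty $e\subseteq V$, $\mathcal{J}^e$ denotes the family of sets $J\subseteq \bigcup_{I\in e} I$ with $|J\cap I|=1$ for every $I\in e$. Let $\mathcal{J}^H=\bigcup_{e\in L(V)\cup E}\mathcal{J}^e$. For $w\in\mathbb{R}^{\mathcal{J}^H}$ write $w_i=w_{\{i\}}$ and $w(A)=\sum_{i\in A}w_i$. Let $\mathscr{S}^H=\{w\in\{0,1\}^{\mathcal{J}^H}: w(I)=1\ \forall I\in V;\ w_J=\prod_{i\in J}w_i\ \forall J\in\mathcal{J}^H, |J|>1\}$ and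 $\mathrm{MC}^H=\operatorname{conv}\mathscr{S}^H$. $\operatorname{proj}_{S'}$ extracts the coordinates indexed by $S'$. *)

From HB Require Import structures.
From mathcomp Require Import all_boot all_order all_algebra.
From mathcomp Require Import reals.
Set Implicit Arguments. Unset Strict Implicit. Unset Printing Implicit Defensive.
Import Order.TTheory GRing.Theory Num.Theory.
Local Open Scope ring_scope.

(* Ground set [n] is represented by 'I_n (elements 0..n-1).
   Vertices are subsets of [n]; a hypergraph is (V, E) with
   V : {set {set 'I_n}} and E : {set {set {set 'I_n}}}. *)

Definition is_hypergraph (n : nat) (V : {set {set 'I_n}})
    (E : {set {set {set 'I_n}}}) : Prop :=
  [/\ (forall I1 I2, I1 \in V -> I2 \in V -> I1 != I2 -> [disjoint I1 & I2]),
      (forall I, I \in V -> (2 <= #|I|)%N) &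
      (forall e, e \in E -> e \subset V /\ (2 <= #|e|)%N)].

Definition Lset (n : nat) (V : {set {set 'I_n}}) : {set {set {set 'I_n}}} :=
  [set [set I] | I in V].

Definition Jset (n : nat) (e : {set {set 'I_n}}) : {set {set 'I_n}} :=
  [set J : {set 'I_n} | (J \subset \bigcup_(I in e) I)
                        && [forall I in e, #|J :&: I| == 1%N]].

Definition JH (n : nat) (V : {set {set 'I_n}}) (E : {set {set {set 'I_n}}})
  : {set {set 'I_n}} :=
  \bigcup_(e in Lset V :|: E) Jset e.

(* A vector of R^S (S a family of subsets of [n]) is represented as a
   function {set 'I_n} -> R vanishing outside S. *)
Definition supported (R : realType) (n : nat) (S : {set {set 'I_n}})
    (w : {set 'I_n} -> R) : Prop :=
  forall J, J \notin S -> w J = 0.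

Definition proj (R : realType) (n : nat) (S : {set {set 'I_n}})
    (w : {set 'I_n} -> R) : {set 'I_n} -> R :=
  fun J => if J \in S then w J else 0.

Definition wpt (R : realType) (n : nat) (w : {set 'I_n} -> R) (i : 'I_n) : R :=
  w [set i].
Definition wsum (R : realType) (n : nat) (w : {set 'I_n} -> R) (A : {set 'I_n}) : R :=
  \sum_(i in A) wpt w i.

Definition SH (R : realType) (n : nat) (V : {set {set 'I_n}})
    (E : {set {set {set 'I_n}}}) (w : {set 'I_n} -> R) : Prop :=
  [/\ supported (JH V E) w,
      (forall J, J \in JH V E -> w J = 0 \/ w J = 1),
      (forall I, I \in V -> wsum w I = 1) &
      (forall J, J \in JH V E -> (1 < #|J|)%N -> w J = \prod_(i in J) wpt w i)].

Definition conv (R : realType) (T : Type) (P : (T -> R) -> Prop) (w : T -> R) : Prop :=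
  exists (k : nat) (p : 'I_k -> T -> R) (l : 'I_k -> R),
    [/\ (forall i, P (p i)), (forall i, 0 <= l i), \sum_(i < k) l i = 1 &
        forall x, w x = \sum_(i < k) l i * p i x].

Definition MC (R : realType) (n : nat) (V : {set {set 'I_n}})
    (E : {set {set {set 'I_n}}}) : ({set 'I_n} -> R) -> Prop :=
  conv (SH V E).

From HB Require Import structures.
From mathcomp Require Import all_boot all_order all_algebra.
From mathcomp Require Import reals boolp.
Import Order.TTheory GRing.Theory Num.Theory.
Local Open Scope ring_scope.
Set Implicit Arguments. Unset Strict Implicit.

(* The inverse of proj_{J^H} on MC^{H'} is the linear map [extend], which computes
   w_J for J in J^{e2} as the sum of the w_{J'} over the transversals J' of e1
   containing J.  On a vertex of MC^{H'}, i.e. a 0/1 point choosing one element i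
   with w_i = 1 in every block, exactly one transversal of e1 consists of chosen
   elements, and it contains J iff J does; hence both sides equal prod_{i in J} w_i.
   As proj and [extend] are linear and send S^{H'} into S^H and S^H into S^{H'},
   they restrict to mutually inverse maps between the convex hulls. *)

Section ConvexHull.
Variables (R : realType) (T : Type).
Implicit Types (f g : (T -> R) -> T -> R) (P Q : (T -> R) -> Prop) (w : T -> R).

Definition lincomb_preserving f := forall k (l : 'I_k -> R) (p : 'I_k -> T -> R),
  f (fun x => \sum_(i < k) l i * p i x) = fun x => \sum_(i < k) l i * f (p i) x.

Lemma lincomb_preserving_comp f g :
  lincomb_preserving f -> lincomb_preserving g -> lincomb_preserving (f \o g).
Proof. by move=> hf hg k l p; rewrite /= hg hf. Qed.

Lemma conv_image f P Q w : lincomb_preserving f ->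
  (forall u, P u -> Q (f u)) -> conv P w -> conv Q (f w).
Proof.
move=> hf hPQ [k [p [l [hp hl hl1 /funext ->]]]].
by rewrite hf; exists k, (f \o p), l; split=> // i; apply: hPQ.
Qed.

Lemma conv_fixed f P w : lincomb_preserving f ->
  (forall u, P u -> f u = u) -> conv P w -> f w = w.
Proof.
move=> hf hP [k [p [l [hp _ _ /funext ->]]]].
by rewrite hf; apply: funext => x; apply: eq_bigr => i _; rewrite hP.
Qed.

End ConvexHull.

Section Projection.
Variables (R : realType) (n : nat) (S : {set {set 'I_n}}).
Implicit Types (u : {set 'I_n} -> R) (P : ({set 'I_n} -> R) -> Prop).

Lemma proj_in u J : J \in S -> proj S u J = u J.
Proof. by rewrite /proj => ->. Qed.

Lemma proj_supported u : supported S (proj S u).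
Proof. by move=> J /negbTE hJ; rewrite /proj hJ. Qed.

Lemma proj_id u : supported S u -> proj S u = u.
Proof.
by move=> hu; apply: funext => J; rewrite /proj; case: ifPn => // /hu ->.
Qed.

Lemma proj_lincomb : lincomb_preserving (@proj R n S).
Proof.
move=> k l p; apply: funext => J; rewrite /proj; case: ifP => // _.
by rewrite big1 // => i _; rewrite mulr0.
Qed.

Lemma conv_supported P w :
  (forall u, P u -> supported S u) -> conv P w -> supported S w.
Proof.
move=> hP hw J hJ.
by rewrite -(conv_fixed proj_lincomb (fun u hu => proj_id (hP u hu)) hw) proj_supported.
Qed.

End Projection.

Section Transversals.
Variable n : nat.
Implicit Types (e f : {set {set 'I_n}}) (I J K S : {set 'I_n}).

Lemma JsetP e J :
  reflect (J \subset cover e /\ forall I, I \in e -> #|J :&: I| = 1%N) (J \in Jset e).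
Proof.
rewrite inE; apply: (iffP andP) => -[sJe hJ]; split=> //.
  by move=> I hI; apply/eqP; move/forall_inP: hJ; apply.
by apply/forall_inP => I /hJ ->.
Qed.

Lemma coverS e f : e \subset f -> cover e \subset cover f.
Proof.
move=> sef; apply/subsetP => i /bigcupP [I hI hiI].
by apply/bigcupP; exists I => //; apply: (subsetP sef).
Qed.

Lemma Jset_sub_cover e f J : e \subset f -> J \in Jset e -> J \subset cover f.
Proof. by move=> sef /JsetP [sJe _]; apply: subset_trans sJe (coverS sef). Qed.

Lemma mem_Jset_cover e J i : J \in Jset e -> i \in J -> exists2 I, I \in e & i \in I.
Proof. by move=> hJ /(subsetP (Jset_sub_cover (subxx e) hJ)) /bigcupP. Qed.

Lemma Jset_meet e J I : J \in Jset e -> I \in e -> exists2 i, i \in J & i \in I.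
Proof.
case/JsetP=> _ hJ /hJ cardJI.
have /card_gt0P [i /setIP [hiJ hiI]] : (0 < #|J :&: I|)%N by rewrite cardJI.
by exists i.
Qed.

Lemma Jset_card_gt1 e J : trivIset e -> (1 < #|e|)%N -> J \in Jset e -> (1 < #|J|)%N.
Proof.
move=> /trivIsetP dis /card_gt1P [I1 [I2 [hI1 hI2 neqI]]] hJ.
have [a haJ haI1] := Jset_meet hJ hI1; have [b hbJ hbI2] := Jset_meet hJ hI2.
apply/card_gt1P; exists a, b; split=> //; apply: contraTneq hbI2 => <-.
by rewrite (disjointFr (dis I1 I2 hI1 hI2 neqI) haI1).
Qed.

Lemma Jset_inj e f J : trivIset (e :|: f) -> J \in Jset e -> J \in Jset f -> e = f.
Proof.
have sub e' f' : trivIset (e' :|: f') -> J \in Jset e' -> J \in Jset f' -> e' \subset f'.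
  move=> dis hJe hJf; apply/subsetP => I hI.
  have [a haJ haI] := Jset_meet hJe hI; have [I' hI' haI'] := mem_Jset_cover hJf haJ.
  by rewrite -(def_pblock dis _ haI) ?(def_pblock dis _ haI') // in_setU ?hI ?hI' ?orbT.
by move=> dis hJe hJf; apply/eqP; rewrite eqEsubset !sub // setUC.
Qed.

Lemma Jset_subset_eq e J K : J \in Jset e -> K \in Jset e -> J \subset K -> J = K.
Proof.
move=> hJ hK sJK; apply/eqP; rewrite eqEsubset sJK; apply/subsetP => i hiK.
have [I hI hiI] := mem_Jset_cover hK hiK.
have [[_ /(_ I hI) cardJ] [_ /(_ I hI) cardK]] := (JsetP _ _ hJ, JsetP _ _ hK).
have eqJK : J :&: I = K :&: I by apply/eqP; rewrite eqEcard setSI //= cardJ cardK.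
by have /setIP [] : i \in J :&: I by rewrite eqJK inE hiK.
Qed.

Lemma Jset_trace e S : (forall I, I \in e -> #|I :&: S| = 1%N) -> cover e :&: S \in Jset e.
Proof.
move=> hS; apply/JsetP; split=> [|I hI]; first exact: subsetIl.
have /setIidPr sIe : I \subset cover e by exact: bigcup_sup.
by rewrite setIAC sIe hS.
Qed.

Lemma Jset_within e S K : (forall I, I \in e -> #|I :&: S| = 1%N) ->
  K \in Jset e -> K \subset S -> K = cover e :&: S.
Proof.
move=> hS hK sKS; apply: (Jset_subset_eq hK (Jset_trace hS)).
by rewrite subsetI sKS (Jset_sub_cover (subxx e) hK).
Qed.

End Transversals.

Section ZeroOneWeights.
Variables (R : numDomainType) (n : nat) (x : 'I_n -> R).
Implicit Types (A I J : {set 'I_n}) (e : {set {set 'I_n}}).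

Lemma prod01E A : {in A, forall i, x i = 0 \/ x i = 1} ->
  \prod_(i in A) x i = (A \subset [set i | x i == 1])%:R.
Proof.
move=> x01; have [sA | /subsetPn [i hiA]] := boolP (A \subset _).
  by apply: big1 => i /(subsetP sA); rewrite inE => /eqP.
rewrite inE (bigD1 i) //=; case: (x01 i hiA) => -> //; first by rewrite mul0r.
by rewrite eqxx.
Qed.

Lemma sum01_eq1 I : {in I, forall i, x i = 0 \/ x i = 1} ->
  \sum_(i in I) x i = 1 -> #|I :&: [set i | x i == 1]| = 1%N.
Proof.
move=> x01; have -> : \sum_(i in I) x i = #|I :&: [set i | x i == 1]|%:R.
  rewrite -sum1_card natr_sum big_mkcond [RHS]big_mkcond /=; apply: eq_bigr => i _.
  rewrite !inE; case: (boolP (i \in I)) => //= hi.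
  by case: (x01 i hi) => ->; rewrite ?eqxx // eq_sym oner_eq0.
by move/eqP; rewrite pnatr_eq1 => /eqP.
Qed.

Lemma sum_Jset_supsets_prod e1 e2 J : e2 \subset e1 ->
  {in cover e1, forall i, x i = 0 \/ x i = 1} ->
  (forall I, I \in e1 -> \sum_(i in I) x i = 1) -> J \in Jset e2 ->
  \sum_(J' in Jset e1 | J \subset J') \prod_(i in J') x i = \prod_(i in J) x i.
Proof.
move=> se21 x01 x1 hJ; set S := [set i | x i == 1].
have sJ1 : J \subset cover e1 := Jset_sub_cover se21 hJ.
have S1 I : I \in e1 -> #|I :&: S| = 1%N.
  move=> hI; apply: sum01_eq1 (x1 I hI) => i hi.
  by apply: x01; apply: (subsetP (bigcup_sup I hI)).
rewrite prod01E; last by move=> i /(subsetP sJ1) /x01.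
rewrite (eq_bigr (fun J' => (J' \subset S)%:R)); last first.
  move=> J' /andP [hJ' _]; apply: prod01E => i.
  by move/(subsetP (Jset_sub_cover (subxx e1) hJ')) /x01.
have [sJS | nsJS] := boolP (J \subset S); last first.
  by rewrite big1 // => J' /andP [_ sJJ']; rewrite (contraNF (subset_trans sJJ') nsJS).
rewrite (bigD1 (cover e1 :&: S)) /=; last by rewrite Jset_trace // subsetI sJ1 sJS.
rewrite subsetIr big1 ?addr0 // => J' /andP [/andP [hJ' _] neJ'].
by case: (boolP (J' \subset S)) => // /(Jset_within S1 hJ') eqJ'; rewrite eqJ' eqxx in neJ'.
Qed.

End ZeroOneWeights.

Section HypergraphTransversals.
Variables (n : nat) (V : {set {set 'I_n}}) (E : {set {set {set 'I_n}}}).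
Implicit Types (e : {set {set 'I_n}}) (J : {set 'I_n}).

Lemma set1_in_JH i : i \in cover V -> [set i] \in JH V E.
Proof.
case/bigcupP=> I hI hiI; apply/bigcupP; exists [set I].
  by rewrite in_setU; apply/orP; left; apply/imsetP; exists I.
apply/JsetP; split; first by rewrite cover1 sub1set.
by move=> I'; rewrite inE => /eqP ->; rewrite (setIidPl _) ?cards1 ?sub1set.
Qed.

Lemma Jset_sub_JH e J : e \in E -> J \in Jset e -> J \in JH V E.
Proof. by move=> he hJ; apply/bigcupP; exists e; rewrite // in_setU he orbT. Qed.

Lemma JH_setU1 e J : (J \in JH V (e |: E)) = (J \in JH V E) || (J \in Jset e).
Proof.
apply/bigcupP/orP => [[f]|[/bigcupP [f hf hJ]|hJ]].
- rewrite in_setU => /orP [hf | /setU1P [-> | hf]] hJ; [left | by right | left];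
    by apply/bigcupP; exists f; rewrite // in_setU hf ?orbT.
- by exists f => //; move: hf; rewrite !in_setU => /orP [] ->; rewrite ?orbT.
- by exists e; rewrite // in_setU setU11 orbT.
Qed.

Hypothesis hH : is_hypergraph V E.

Lemma trivIset_vertices : trivIset V.
Proof. by case: hH => dis _ _; apply/trivIsetP. Qed.

Lemma edge_subset_vertices e : e \in Lset V :|: E -> e \subset V.
Proof.
case: hH => _ _ hE; rewrite in_setU => /orP [/imsetP [I hI ->] | /hE []//].
by rewrite sub1set.
Qed.

Lemma JH_sub_cover J : J \in JH V E -> J \subset cover V.
Proof. by case/bigcupP=> e /edge_subset_vertices; apply: Jset_sub_cover. Qed.

Lemma Jset_notin_JH e J : e \subset V -> e \notin E -> (1 < #|e|)%N ->
  J \in Jset e -> J \notin JH V E.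
Proof.
move=> seV neE e_gt1 hJ; apply/bigcupP => -[f hf hJf].
have tiV : trivIset (f :|: e).
  by apply: trivIsetS trivIset_vertices; rewrite subUset seV edge_subset_vertices.
move: hf; rewrite (Jset_inj tiV hJf hJ) in_setU (negbTE neE) orbF.
by case/imsetP=> I _ eI; rewrite eI cards1 in e_gt1.
Qed.

Lemma is_hypergraph_setU1 e : e \subset V -> (1 < #|e|)%N -> is_hypergraph V (e |: E).
Proof.
move=> seV e_gt1; case: hH => dis hV hE; split=> // f /setU1P [-> | /hE //].
by split=> //; apply: ltnW.
Qed.

End HypergraphTransversals.

Lemma wpt_proj (R : realType) n (V : {set {set 'I_n}}) (E : {set {set {set 'I_n}}})
    (u : {set 'I_n} -> R) i :
  i \in cover V -> wpt (proj (JH V E) u) i = wpt u i.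
Proof. by move/(set1_in_JH E); apply: proj_in. Qed.

Lemma MC_supported (R : realType) n (V : {set {set 'I_n}}) (E : {set {set {set 'I_n}}})
    (w : {set 'I_n} -> R) :
  MC V E w -> supported (JH V E) w.
Proof. by apply: conv_supported => u []. Qed.

Section VerticesOfMC.
Variables (R : realType) (n : nat) (V : {set {set 'I_n}}) (E : {set {set {set 'I_n}}}).
Hypothesis hH : is_hypergraph V E.
Implicit Types (p : {set 'I_n} -> R) (e : {set {set 'I_n}}) (J : {set 'I_n}).

Lemma SH_wpt01 p i : SH V E p -> i \in cover V -> wpt p i = 0 \/ wpt p i = 1.
Proof. by case=> _ p01 _ _ /(set1_in_JH E) /p01. Qed.

Lemma SH_Jset_prod p e J : SH V E p -> e \in E -> J \in Jset e ->
  p J = \prod_(i in J) wpt p i.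
Proof.
case: (hH) => _ _ hE [_ _ _ pprod] he hJ; have [seV e_gt1] := hE e he.
apply: pprod; first exact: Jset_sub_JH hJ.
exact: Jset_card_gt1 (trivIsetS seV (trivIset_vertices hH)) e_gt1 hJ.
Qed.

Lemma SH_marginal p e1 e2 J : SH V E p -> e1 \in E -> e2 \subset e1 -> J \in Jset e2 ->
  \sum_(J' in Jset e1 | J \subset J') p J' = \prod_(i in J) wpt p i.
Proof.
move=> hp he1 se21 hJ; have [_ _ psum _] := hp.
have se1V : e1 \subset V by case: hH => _ _ /(_ e1 he1) [].
rewrite -(sum_Jset_supsets_prod se21 _ _ hJ).
- by apply: eq_bigr => J' /andP [hJ' _]; apply: SH_Jset_prod hJ'.
- by move=> i /(subsetP (coverS se1V)); apply: SH_wpt01.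
- by move=> I /(subsetP se1V) /psum.
Qed.

End VerticesOfMC.

Definition extend (R : realType) n (e1 e2 : {set {set 'I_n}}) (u : {set 'I_n} -> R) :
    {set 'I_n} -> R :=
  fun J => if J \in Jset e2 then \sum_(J' in Jset e1 | J \subset J') u J' else u J.

Lemma extend_out (R : realType) n (e1 e2 : {set {set 'I_n}}) (u : {set 'I_n} -> R) J :
  J \notin Jset e2 -> extend e1 e2 u J = u J.
Proof. by rewrite /extend => /negbTE ->. Qed.

Lemma extend_lincomb (R : realType) n (e1 e2 : {set {set 'I_n}}) :
  lincomb_preserving (@extend R n e1 e2).
Proof.
move=> k l p; apply: funext => J; rewrite /extend; case: ifP => // _.
by rewrite exchange_big; apply: eq_bigr => i _; rewrite mulr_sumr.
Qed.

Section EdgeRefinement.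
Variables (R : realType) (n : nat) (V : {set {set 'I_n}}) (E : {set {set {set 'I_n}}}).
Variables e1 e2 : {set {set 'I_n}}.
Hypotheses (hH : is_hypergraph V E) (e1E : e1 \in E) (se21 : e2 \subset e1).
Hypotheses (e2notE : e2 \notin E) (e2_gt1 : (1 < #|e2|)%N).
Implicit Types (u w p : {set 'I_n} -> R) (J : {set 'I_n}).

Local Notation E' := (e2 |: E).
Local Notation ext := (@extend R n e1 e2).
Local Notation prj := (@proj R n (JH V E)).

Let se2V : e2 \subset V.
Proof. by case: hH => _ _ /(_ e1 e1E) [se1V _]; apply: subset_trans se1V. Qed.

Let hH' : is_hypergraph V E' := is_hypergraph_setU1 hH se2V e2_gt1.

Lemma JH_notin_Jset J : J \in JH V E -> J \notin Jset e2.
Proof. by apply: contraL; apply: Jset_notin_JH. Qed.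

Lemma wpt_extend u i : i \in cover V -> wpt (ext u) i = wpt u i.
Proof. by move/(set1_in_JH E)/JH_notin_Jset; apply: extend_out. Qed.

Lemma extend_marginal u J : J \in Jset e2 ->
  ext u J = \sum_(J' in Jset e1 | J \subset J') ext u J'.
Proof.
move=> hJ; rewrite /extend hJ; apply: eq_bigr => J' /andP [hJ' _].
by rewrite (negbTE (JH_notin_Jset (Jset_sub_JH V e1E hJ'))).
Qed.

Lemma extend_projK w : supported (JH V E') w ->
  (forall J, J \in Jset e2 -> w J = \sum_(J' in Jset e1 | J \subset J') w J') ->
  ext (prj w) = w.
Proof.
move=> wsup wmarg; apply: funext => J; have [hJ | nJ] := boolP (J \in Jset e2).
  rewrite /extend hJ wmarg //; apply: eq_bigr => J' /andP [hJ' _].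
  exact: proj_in (Jset_sub_JH V e1E hJ').
rewrite extend_out // /proj; case: ifPn => // nJH.
by rewrite wsup // JH_setU1 negb_or nJH.
Qed.

Lemma proj_extendK u : supported (JH V E) u -> prj (ext u) = u.
Proof.
move=> usup; apply: funext => J; rewrite /proj; case: ifPn => [/JH_notin_Jset|/usup //].
exact: extend_out.
Qed.

Lemma SH_proj p : SH V E' p -> SH V E (prj p).
Proof.
case=> _ p01 psum pprod; split.
- exact: proj_supported.
- by move=> J hJ; rewrite proj_in //; apply: p01; rewrite JH_setU1 hJ.
- move=> I hI; rewrite -(psum I hI); apply: eq_bigr => i hi.
  by apply: wpt_proj; apply: (subsetP (bigcup_sup I hI)).
- move=> J hJ J_gt1; rewrite proj_in // pprod ?JH_setU1 ?hJ //.
  by apply: eq_bigr => i /(subsetP (JH_sub_cover hH hJ)) /(wpt_proj E p) ->.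
Qed.

Lemma SH_extend p : SH V E p -> SH V E' (ext p).
Proof.
move=> hp; have [psup p01 psum pprod] := hp.
have ext_e2 J : J \in Jset e2 -> ext p J = \prod_(i in J) wpt p i.
  by move=> hJ; rewrite /extend hJ (SH_marginal hH hp e1E se21 hJ).
have prod_ext J : J \subset cover V ->
    \prod_(i in J) wpt (ext p) i = \prod_(i in J) wpt p i.
  by move=> sJV; apply: eq_bigr => i /(subsetP sJV); apply: wpt_extend.
split.
- move=> J; rewrite JH_setU1 negb_or => /andP [nJH nJ].
  by rewrite extend_out // psup.
- move=> J; rewrite JH_setU1 => /orP [hJ | hJ].
    by rewrite extend_out ?JH_notin_Jset //; apply: p01.
  rewrite ext_e2 // prod01E; first by case: (_ \subset _); [right | left].
  by move=> i /(subsetP (Jset_sub_cover se2V hJ)); apply: SH_wpt01 hp.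
- move=> I hI; rewrite -(psum I hI); apply: eq_bigr => i hi; apply: wpt_extend.
  by apply: (subsetP (bigcup_sup I hI)).
- move=> J; rewrite JH_setU1 => /orP [hJ | hJ] J_gt1.
    by rewrite extend_out ?JH_notin_Jset // pprod // prod_ext ?(JH_sub_cover hH).
  by rewrite ext_e2 // prod_ext ?(Jset_sub_cover se2V).
Qed.

Lemma SH_marginal_refined p J : SH V E' p -> J \in Jset e2 ->
  p J = \sum_(J' in Jset e1 | J \subset J') p J'.
Proof.
move=> hp hJ; rewrite (SH_marginal hH' hp _ se21 hJ) ?in_setU1 ?e1E ?orbT //.
exact: (SH_Jset_prod hH' hp (setU11 e2 E) hJ).
Qed.

Lemma MC_extend_projK w : MC V E' w -> ext (prj w) = w.
Proof.
apply: conv_fixed (lincomb_preserving_comp (extend_lincomb _ _) (@proj_lincomb _ _ _)) _.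
move=> p hp; apply: extend_projK; first by case: hp.
by move=> J; apply: SH_marginal_refined.
Qed.

Lemma MC_proj w : MC V E' w -> MC V E (prj w).
Proof. by apply: conv_image; [apply: proj_lincomb | apply: SH_proj]. Qed.

Lemma MC_extend v : MC V E v -> MC V E' (ext v).
Proof. by apply: conv_image; [apply: extend_lincomb | apply: SH_extend]. Qed.

End EdgeRefinement.

Theorem proposition2p3 (R : realType) (n : nat) (V : {set {set 'I_n}})
    (E : {set {set {set 'I_n}}}) (e1 e2 : {set {set 'I_n}}) :
  (0 < n)%N ->
  is_hypergraph V E ->
  e1 \in E -> e2 \proper e1 -> e2 \notin E -> (1 < #|e2|)%N ->
  let E' := e2 |: E in
  (* proj_{J^H} is linear *)
  (forall (a : R) (w1 w2 : {set 'I_n} -> R),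
      proj (JH V E) (fun J => a * w1 J + w2 J)
      = (fun J => a * proj (JH V E) w1 J + proj (JH V E) w2 J)) /\
  (* its restriction to MC^{H'} is a bijection onto MC^H *)
  (forall w : {set 'I_n} -> R, MC V E' w -> MC V E (proj (JH V E) w)) /\
  (forall w1 w2 : {set 'I_n} -> R, MC V E' w1 -> MC V E' w2 ->
      proj (JH V E) w1 = proj (JH V E) w2 -> w1 = w2) /\
  (forall v : {set 'I_n} -> R, MC V E v ->
      exists w, MC V E' w /\ proj (JH V E) w = v) /\
  (* explicit description of MC^{H'} *)
  (forall w : {set 'I_n} -> R,
      MC V E' w <->
      [/\ supported (JH V E') w,
          MC V E (proj (JH V E) w) &
          forall J, J \in Jset e2 ->
            w J = \sum_(J' in Jset e1 | J \subset J') w J']).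
Proof.
move=> _ hH e1E /proper_sub se21 e2notE e2_gt1 E'.
have extK (w : {set 'I_n} -> R) : MC V E' w -> extend e1 e2 (proj (JH V E) w) = w.
  exact: MC_extend_projK.
split.
  move=> a w1 w2; apply: funext => J; rewrite /proj.
  by case: ifP; rewrite ?mulr0 ?addr0.
split; first exact: MC_proj.
split; first by move=> w1 w2 hw1 hw2 eqw; rewrite -(extK w1) // -(extK w2) // eqw.
split.
  move=> v hv; exists (extend e1 e2 v); split; first exact: MC_extend.
  by apply: proj_extendK; last exact: MC_supported hv.
move=> w; split=> [hw | [wsup hw wmarg]].
  split; [exact: MC_supported | exact: MC_proj hw |].
  by move=> J hJ; rewrite -(extK w hw); apply: (extend_marginal hH).
have <- : extend e1 e2 (proj (JH V E) w) = w by apply: extend_projK.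
exact: MC_extend.
Qed.
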